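(* Let $n\ge 2$, let $A\in\mathbb{R}^{n\times n}$ be symmetric with zero diagonal, let $\lambda>0$, and let $p_1,\dots,p_n\in[0,1)$ with $p_{\max}=\max_ip_i$. Then for every fixed $w\in\mathbb{R}^{2n-1}$, $$\mathbb{E}_{X\sim\mathcal{D}_{\mathsf{miss}}}[G_{\mathsf{miss}}(w;X)]=\nabla\widetilde S(w),$$ and for all $X\in\{-1,0,1\}^n$ and all $w\in\Delta(\lambda,2n-1)$, $$\|G_{\mathsf{miss}}(w;X)\|_\infty\le\frac{1}{(1-p_{\max})^2}\exp\left(\frac{\lambda}{1-p_{\max}}\right).$$
   Context: Ising model $\mathcal{D}=\mathcal{D}(A,0)$ on $\{-1,1\}^n$: $\Pr[Z=z]\propto\exp\big(\sum_{i<j}A_{ij}z_iz_j\big)$. Missing-data distribution $\mathcal{D}_{\mathsf{miss}}$: draw $Z\sim\mathcal{D}$ and independent $C_1,\dots,C_n$ with $C_i\in\{0,1\}$, $\Pr[C_i=1]=1-p_i$; output $X$ with $X_i=C_iZ_i$ (a missing entry is recorded as $0$). $\Delta(W,k)=\{x\in\mathbb{R}^k:x\ge0,\sum_ix_i=W\}$. Simplex ISO: $\widetilde S(w)=\mathbb{E}_{Z\sim\mathcal{D}}\big[\exp\big(-\sum_{j=1}^{n-1}(w_j-w_{n-1+j})Z_nZ_j\big)\big]$ for $w\in\mathbb{R}^{2n-1}$. Estimator: for $w\in\mathbb{R}^{2n-1}$, $X\in\{-1,0,1\}^n$, put $v_j=w_j-w_{n-1+j}$ and for $i\in[n-1]$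 $$g^i_{\mathsf{miss}}(w;X)=-\frac{X_n}{1-p_n}\cdot\frac{\exp(-v_iX_nX_i)X_i}{1-p_i}\cdot\prod_{j\in[n-1],\,j\ne i}\frac{\exp(-v_jX_nX_j)-p_j}{1-p_j},$$ and $G_{\mathsf{miss}}(w;X)=\sum_{i=1}^{n-1}g^i_{\mathsf{miss}}(w;X)(e^i-e^{n-1+i})\in\mathbb{R}^{2n-1}$, where $e^i$ is the $i$-th standard basis vector of $\mathbb{R}^{2n-1}$. *)

From Stdlib Require Import Reals List.
Open Scope R_scope.

Fixpoint rsum (m : nat) (f : nat -> R) : R :=
  match m with O => 0 | S k => rsum k f + f k end.
Fixpoint rprod (m : nat) (f : nat -> R) : R :=
  match m with O => 1 | S k => rprod k f * f k end.
(* max over indices 0..m-1 (starting from 0; used only with p_i >= 0, m >= 1) *)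
Fixpoint rmaxn (m : nat) (f : nat -> R) : R :=
  match m with O => 0 | S k => Rmax (rmaxn k f) (f k) end.

Definition lsum {T : Type} (l : list T) (f : T -> R) : R :=
  fold_right (fun x acc => f x + acc) 0 l.

(* All boolean vectors b : {0..m-1} -> bool (values outside are false). *)
Fixpoint bcube (m : nat) : list (nat -> bool) :=
  match m with
  | O => (fun _ => false) :: nil
  | S k => flat_map (fun b =>
             (fun i => if Nat.eqb i k then true else b i) ::
             (fun i => if Nat.eqb i k then false else b i) :: nil) (bcube k)
  end.

Definition spin (b : nat -> bool) (i : nat) : R := if b i then 1 else -1.

(* Ising model D(A,0) on {-1,1}^n (coordinates 0..n-1). *)
Definition ising_energy (n : nat) (A : nat -> nat -> R) (z : nat -> R) : R :=
  rsum n (fun j => rsum j (fun i => A i j * z i * z j)).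
Definition ising_weight (n : nat) (A : nat -> nat -> R) (z : nat -> R) : R :=
  exp (ising_energy n A z).
Definition ising_Z (n : nat) (A : nat -> nat -> R) : R :=
  lsum (bcube n) (fun b => ising_weight n A (spin b)).
Definition E_ising (n : nat) (A : nat -> nat -> R) (f : (nat -> R) -> R) : R :=
  lsum (bcube n) (fun b => ising_weight n A (spin b) / ising_Z n A * f (spin b)).

(* Missing-data distribution: C_i = 1 (observed) w.p. 1 - p_i, independent;
   X_i = C_i Z_i.  E_{X ~ D_miss}[f X]. *)
Definition mask_prob (n : nat) (p : nat -> R) (c : nat -> bool) : R :=
  rprod n (fun i => if c i then 1 - p i else p i).
Definition E_miss (n : nat) (A : nat -> nat -> R) (p : nat -> R)
    (f : (nat -> R) -> R) : R :=
  E_ising n A (fun z =>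
    lsum (bcube n) (fun c =>
      mask_prob n p c * f (fun i => if c i then z i else 0))).

(* 0-based indexing: node n-1 plays the role of node n of the paper;
   j in 0..n-2 corresponds to the paper's j+1; w : R^{2n-1} has coordinates
   0..2n-2, and v_j = w_j - w_{n-1+j} (0-based). *)
Definition vcoef (n : nat) (w : nat -> R) (j : nat) : R := w j - w (n - 1 + j)%nat.

Definition Stilde (n : nat) (A : nat -> nat -> R) (w : nat -> R) : R :=
  E_ising n A (fun z =>
    exp (- rsum (n - 1) (fun j => vcoef n w j * z (n - 1)%nat * z j))).

Definition g_miss (n : nat) (p : nat -> R) (w : nat -> R) (X : nat -> R) (i : nat) : R :=
  let v := vcoef n w in
  let last := (n - 1)%nat in
  - (X last / (1 - p last))
  * (exp (- v i * X last * X i) * X i / (1 - p i))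
  * rprod (n - 1) (fun j =>
      if Nat.eqb j i then 1
      else (exp (- v j * X last * X j) - p j) / (1 - p j)).

(* k-th coordinate (0..2n-2) of G_miss(w;X) = sum_i g^i (e^i - e^{n-1+i}) *)
Definition G_miss (n : nat) (p : nat -> R) (w : nat -> R) (X : nat -> R) (k : nat) : R :=
  if Nat.ltb k (n - 1) then g_miss n p w X k
  else if Nat.ltb k (2 * n - 2) then - g_miss n p w X (k - (n - 1))
  else 0.

Definition upd (w : nat -> R) (k : nat) (t : R) : nat -> R :=
  fun i => if Nat.eqb i k then t else w i.

Definition in_simplex (W : R) (m : nat) (w : nat -> R) : Prop :=
  (forall k, (k < m)%nat -> 0 <= w k) /\ rsum m w = W.

(* The mask bits are independent of Z and of each other, and for
   fixed Z the estimator g^i is a product of factors each depending on a single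
   bit C_j, once the masked X_n in the exponents is replaced by Z_n (harmless: the
   leading factor X_n kills the term whenever X_n is missing).  The expectation
   over the mask therefore factorises: (exp(-v_j X_n X_j) - p_j)/(1 - p_j) averages
   to exp(-v_j Z_n Z_j), the i-th factor to Z_i exp(-v_i Z_n Z_i) and the last to
   -Z_n, so E[g^i | Z] = -Z_n Z_i exp(-sum_j v_j Z_n Z_j), the derivative of the
   integrand of S~ in w_i (and minus the one in w_(n-1+i)).

   Since |v_j X_n X_j| <= |v_j| and 1 + x <= exp x, each factor
   (exp(-v_j X_n X_j) - p_j)/(1 - p_j) is at most exp(|v_j|/(1 - p_j)) in absolute
   value, and sum_j |v_j| <= sum_k w_k = lambda on the simplex. *)
From Stdlib Require Import Reals List Lra Lia Psatz.
Open Scope R_scope.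

Lemma exp_le_exp_compat x y : x <= y -> exp x <= exp y.
Proof. intros [Hlt | ->]; [left; apply exp_increasing, Hlt | lra]. Qed.

Lemma rsum_ext m f g : (forall j, (j < m)%nat -> f j = g j) -> rsum m f = rsum m g.
Proof.
induction m as [|m IH]; intros H; simpl; [reflexivity|].
rewrite IH, H; [reflexivity | lia | intros; apply H; lia].
Qed.

Lemma rprod_ext m f g : (forall j, (j < m)%nat -> f j = g j) -> rprod m f = rprod m g.
Proof.
induction m as [|m IH]; intros H; simpl; [reflexivity|].
rewrite IH, H; [reflexivity | lia | intros; apply H; lia].
Qed.

Lemma rsum_plus m f g : rsum m (fun j => f j + g j) = rsum m f + rsum m g.
Proof. induction m as [|m IH]; simpl; [ring | rewrite IH; ring]. Qed.

Lemma rsum_scal_r m f a : rsum m (fun j => f j * a) = rsum m f * a.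
Proof. induction m as [|m IH]; simpl; [ring | rewrite IH; ring]. Qed.

Lemma rsum_opp m f : rsum m (fun j => - f j) = - rsum m f.
Proof. induction m as [|m IH]; simpl; [ring | rewrite IH; ring]. Qed.

Lemma rsum_le m f g : (forall j, (j < m)%nat -> f j <= g j) -> rsum m f <= rsum m g.
Proof.
induction m as [|m IH]; intros H; simpl; [lra|].
apply Rplus_le_compat; [apply IH; intros; apply H |apply H]; lia.
Qed.

Lemma rsum_add_range a b f : rsum (a + b) f = rsum a f + rsum b (fun j => f (a + j)%nat).
Proof.
induction b as [|b IH]; simpl; [rewrite Nat.add_0_r; ring|].
rewrite Nat.add_succ_r; simpl; rewrite IH; ring.
Qed.

Lemma rsum_delta m k c :
  rsum m (fun j => if Nat.eqb j k then c j else 0) = if Nat.ltb k m then c k else 0.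
Proof.
induction m as [|m IH]; simpl; [destruct (Nat.ltb_spec k 0); [lia | reflexivity]|].
rewrite IH; destruct (Nat.ltb_spec k m), (Nat.ltb_spec k (S m)), (Nat.eqb_spec m k);
  subst; try lia; ring.
Qed.

Lemma rprod_last n f : (1 <= n)%nat -> rprod n f = rprod (n - 1) f * f (n - 1)%nat.
Proof. destruct n as [|n]; intros; [lia | simpl; rewrite Nat.sub_0_r; reflexivity]. Qed.

Lemma rprod_mult m f g : rprod m (fun j => f j * g j) = rprod m f * rprod m g.
Proof. induction m as [|m IH]; simpl; [ring | rewrite IH; ring]. Qed.

Lemma rprod_extract m i a f : (i < m)%nat ->
  rprod m (fun j => if Nat.eqb j i then a j else f j)
  = a i * rprod m (fun j => if Nat.eqb j i then 1 else f j).
Proof.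
induction m as [|m IH]; intros Hi; [lia|]; simpl.
destruct (Nat.eqb_spec m i) as [->|Hmi]; [|rewrite IH by lia; ring].
rewrite (rprod_ext i _ f), (rprod_ext i (fun j => if Nat.eqb j i then 1 else f j) f);
  [ring | |]; intros j Hj; destruct (Nat.eqb_spec j i); [lia | reflexivity | lia | reflexivity].
Qed.

Lemma rprod_indicator m i a : (i < m)%nat ->
  rprod m (fun j => if Nat.eqb j i then a j else 1) = a i.
Proof.
intros Hi; rewrite rprod_extract by exact Hi.
rewrite (rprod_ext m (fun j => if Nat.eqb j i then 1 else 1) (fun _ => 1)) by (intros j _; destruct (Nat.eqb j i); reflexivity).
enough (rprod m (fun _ => 1) = 1) as -> by ring.
clear Hi; induction m as [|m IH]; simpl; [reflexivity | rewrite IH; ring].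
Qed.

Lemma rprod_zero m i f : (i < m)%nat -> f i = 0 -> rprod m f = 0.
Proof.
induction m as [|m IH]; intros Hi Hf; simpl; [lia|].
destruct (Nat.eq_dec i m) as [->|]; [rewrite Hf | rewrite IH by (lia || exact Hf)]; ring.
Qed.

Lemma exp_rsum m f : exp (rsum m f) = rprod m (fun j => exp (f j)).
Proof. induction m as [|m IH]; simpl; [apply exp_0 | rewrite exp_plus, IH; reflexivity]. Qed.

Lemma rprod_Rabs_le m f g :
  (forall j, (j < m)%nat -> Rabs (f j) <= g j) -> Rabs (rprod m f) <= rprod m g.
Proof.
induction m as [|m IH]; simpl; intros H; [rewrite Rabs_R1; lra|].
rewrite Rabs_mult; apply Rmult_le_compat; try apply Rabs_pos; [apply IH; intros; apply H | apply H]; lia.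
Qed.

Lemma lsum_app {T} (l1 l2 : list T) f : lsum (l1 ++ l2) f = lsum l1 f + lsum l2 f.
Proof. induction l1 as [|x l1 IH]; simpl; [ring|]; unfold lsum in *; simpl; rewrite IH; ring. Qed.

Lemma lsum_flat_map {T U} (g : T -> list U) l f :
  lsum (flat_map g l) f = lsum l (fun x => lsum (g x) f).
Proof. induction l as [|x l IH]; simpl; [reflexivity | rewrite lsum_app, IH; reflexivity]. Qed.

Lemma lsum_ext {T} l (f g : T -> R) : (forall x, f x = g x) -> lsum l f = lsum l g.
Proof. intros H; induction l as [|x l IH]; unfold lsum in *; simpl; [reflexivity | rewrite IH, H; reflexivity]. Qed.

Lemma lsum_mulr {T} l (f : T -> R) a : lsum l (fun x => f x * a) = lsum l f * a.
Proof. induction l as [|x l IH]; unfold lsum in *; simpl; [ring | rewrite IH; ring]. Qed.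

Lemma lsum_opp {T} l (f : T -> R) : lsum l (fun x => - f x) = - lsum l f.
Proof. induction l as [|x l IH]; unfold lsum in *; simpl; [ring | rewrite IH; ring]. Qed.

Lemma lsum_bcube_rprod m (F : nat -> bool -> R) :
  lsum (bcube m) (fun c => rprod m (fun j => F j (c j)))
  = rprod m (fun j => F j true + F j false).
Proof.
induction m as [|m IH]; [unfold lsum; simpl; ring|].
cbn [bcube rprod]; rewrite lsum_flat_map, <- IH, <- lsum_mulr.
apply lsum_ext; intros c; unfold lsum; simpl; rewrite Nat.eqb_refl.
rewrite (rprod_ext m (fun j => F j (if Nat.eqb j m then true else c j)) (fun j => F j (c j))),
  (rprod_ext m (fun j => F j (if Nat.eqb j m then false else c j)) (fun j => F j (c j)));
  [ring | |]; intros j Hj; destruct (Nat.eqb_spec j m); [lia | reflexivity | lia | reflexivity].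
Qed.

Definition mask (c : nat -> bool) (z : nat -> R) (i : nat) : R := if c i then z i else 0.

Definition mask_weight (p : nat -> R) (j : nat) (b : bool) : R := if b then 1 - p j else p j.

Definition g_factor_inner n p w (y : R) i j (x : R) : R :=
  if Nat.eqb j i then exp (- vcoef n w j * y * x) * x / (1 - p j)
  else (exp (- vcoef n w j * y * x) - p j) / (1 - p j).

Definition g_factor n p w (y : R) i j (x : R) : R :=
  if Nat.eqb j (n - 1) then - (x / (1 - p j)) else g_factor_inner n p w y i j x.

Lemma g_miss_rprod n p w X i : (1 <= n)%nat -> (i < n - 1)%nat ->
  g_miss n p w X i = rprod n (fun j => g_factor n p w (X (n - 1)%nat) i j (X j)).
Proof.
intros Hn Hi; rewrite rprod_last by exact Hn.
unfold g_factor at 2; rewrite Nat.eqb_refl.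
rewrite (rprod_ext (n - 1) _ (fun j => g_factor_inner n p w (X (n - 1)%nat) i j (X j)))
  by (intros j Hj; unfold g_factor; destruct (Nat.eqb_spec j (n - 1)); [lia | reflexivity]).
unfold g_factor_inner; rewrite rprod_extract by exact Hi.
unfold g_miss; ring.
Qed.

Lemma g_miss_mask n p w z c i : (1 <= n)%nat -> (i < n - 1)%nat ->
  g_miss n p w (mask c z) i
  = rprod n (fun j => g_factor n p w (z (n - 1)%nat) i j (mask c z j)).
Proof.
intros Hn Hi; rewrite g_miss_rprod by assumption.
destruct (c (n - 1)%nat) eqn:HcL.
- replace (mask c z (n - 1)%nat) with (z (n - 1)%nat) by (unfold mask; rewrite HcL; reflexivity).
  reflexivity.
- assert (Hlast : forall y, g_factor n p w y i (n - 1) (mask c z (n - 1)%nat) = 0)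
    by (intros y; unfold g_factor, mask; rewrite Nat.eqb_refl, HcL; unfold Rdiv; ring).
  rewrite (rprod_zero n (n - 1)), (rprod_zero n (n - 1)); auto; lia.
Qed.

Lemma g_factor_mask_mean n p w y z i j : p j < 1 ->
  mask_weight p j true * g_factor n p w y i j (z j)
  + mask_weight p j false * g_factor n p w y i j 0
  = if Nat.eqb j (n - 1) then - z j
    else (if Nat.eqb j i then z j else 1) * exp (- (vcoef n w j * y * z j)).
Proof.
intros Hp; unfold mask_weight, g_factor, g_factor_inner.
rewrite !Rmult_0_r, exp_0.
replace (- vcoef n w j * y * z j) with (- (vcoef n w j * y * z j)) by ring.
destruct (Nat.eqb j (n - 1)), (Nat.eqb j i); field; lra.
Qed.

Lemma mask_mean_g_miss n p w z i : (1 <= n)%nat -> (i < n - 1)%nat ->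
  (forall j, (j < n)%nat -> p j < 1) ->
  lsum (bcube n) (fun c => mask_prob n p c * g_miss n p w (mask c z) i)
  = - z (n - 1)%nat * z i * exp (- rsum (n - 1) (fun j => vcoef n w j * z (n - 1)%nat * z j)).
Proof.
intros Hn Hi Hp.
set (F j b := mask_weight p j b * g_factor n p w (z (n - 1)%nat) i j (if b then z j else 0)).
rewrite (lsum_ext _ _ (fun c => rprod n (fun j => F j (c j)))).
2:{ intros c; rewrite g_miss_mask by assumption; unfold mask_prob; rewrite <- rprod_mult; reflexivity. }
rewrite lsum_bcube_rprod.
rewrite (rprod_ext n _ (fun j => if Nat.eqb j (n - 1) then - z j
    else (if Nat.eqb j i then z j else 1) * exp (- (vcoef n w j * z (n - 1)%nat * z j))))
  by (intros j Hj; apply g_factor_mask_mean, Hp, Hj).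
rewrite rprod_last, Nat.eqb_refl by exact Hn.
rewrite (rprod_ext (n - 1) _ (fun j => (if Nat.eqb j i then z j else 1)
    * exp (- (vcoef n w j * z (n - 1)%nat * z j))))
  by (intros j Hj; destruct (Nat.eqb_spec j (n - 1)); [lia | reflexivity]).
rewrite rprod_mult, rprod_indicator, <- exp_rsum, rsum_opp by exact Hi.
ring.
Qed.

Definition signed_embed (n : nat) (f : nat -> R) (k : nat) : R :=
  if Nat.ltb k (n - 1) then f k
  else if Nat.ltb k (2 * n - 2) then - f (k - (n - 1))%nat
  else 0.

Lemma G_miss_signed_embed n p w X k : G_miss n p w X k = signed_embed n (g_miss n p w X) k.
Proof. reflexivity. Qed.

Lemma signed_embed_ext n f g k : (forall i, (i < n - 1)%nat -> f i = g i) ->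
  signed_embed n f k = signed_embed n g k.
Proof.
intros H; unfold signed_embed.
destruct (Nat.ltb_spec k (n - 1)), (Nat.ltb_spec k (2 * n - 2)); rewrite ?H by lia; reflexivity.
Qed.

Lemma signed_embed_scal n a f k :
  signed_embed n (fun i => a * f i) k = a * signed_embed n f k.
Proof. unfold signed_embed; destruct (Nat.ltb k (n - 1)), (Nat.ltb k (2 * n - 2)); ring. Qed.

Lemma lsum_signed_embed {T} n l (a : T -> R) f k :
  lsum l (fun c => a c * signed_embed n (f c) k)
  = signed_embed n (fun i => lsum l (fun c => a c * f c i)) k.
Proof.
unfold signed_embed; destruct (Nat.ltb k (n - 1)), (Nat.ltb k (2 * n - 2)).
- reflexivity.
- reflexivity.
- rewrite <- lsum_opp; apply lsum_ext; intros; ring.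
- rewrite lsum_mulr; ring.
Qed.

Lemma Rabs_signed_embed_le n f k B : 0 <= B -> (forall i, (i < n - 1)%nat -> Rabs (f i) <= B) ->
  Rabs (signed_embed n f k) <= B.
Proof.
intros HB H; unfold signed_embed.
destruct (Nat.ltb_spec k (n - 1)), (Nat.ltb_spec k (2 * n - 2));
  rewrite ?Rabs_Ropp, ?Rabs_R0; auto; apply H; lia.
Qed.

Definition vcoef_slope (n k j : nat) : R :=
  (if Nat.eqb j k then 1 else 0) - (if Nat.eqb (n - 1 + j) k then 1 else 0).

Lemma vcoef_upd n w k t j :
  vcoef n (upd w k t) j = vcoef n w j + (t - w k) * vcoef_slope n k j.
Proof.
unfold vcoef, vcoef_slope, upd.
destruct (Nat.eqb_spec (n - 1 + j) k) as [Hjk|], (Nat.eqb_spec j k) as [->|]; rewrite ?Hjk; ring.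
Qed.

Lemma rsum_vcoef_slope n k c :
  rsum (n - 1) (fun j => vcoef_slope n k j * c j) = signed_embed n c k.
Proof.
unfold signed_embed, vcoef_slope.
destruct (Nat.ltb_spec k (n - 1)) as [Hk|Hk]; [|destruct (Nat.ltb_spec k (2 * n - 2)) as [Hk'|Hk']].
- rewrite (rsum_ext _ _ (fun j => if Nat.eqb j k then c j else 0)), rsum_delta.
  + destruct (Nat.ltb_spec k (n - 1)); [reflexivity | lia].
  + intros j Hj; destruct (Nat.eqb_spec j k), (Nat.eqb_spec (n - 1 + j) k); lia || ring.
- rewrite (rsum_ext _ _ (fun j => if Nat.eqb j (k - (n - 1)) then - c j else 0)), rsum_delta.
  + destruct (Nat.ltb_spec (k - (n - 1)) (n - 1)); [reflexivity | lia].
  + intros j Hj; destruct (Nat.eqb_spec j k), (Nat.eqb_spec (n - 1 + j) k),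
      (Nat.eqb_spec j (k - (n - 1))); lia || ring.
- rewrite (rsum_ext _ _ (fun j => if Nat.eqb j k then c j else 0)), rsum_delta.
  + destruct (Nat.ltb_spec k (n - 1)); [lia | reflexivity].
  + intros j Hj; destruct (Nat.eqb_spec j k), (Nat.eqb_spec (n - 1 + j) k); lia || ring.
Qed.

Lemma E_ising_ext n A f g : (forall z, f z = g z) -> E_ising n A f = E_ising n A g.
Proof. intros H; unfold E_ising; apply lsum_ext; intros b; rewrite H; reflexivity. Qed.

Lemma derivable_pt_lim_lsum {T} (l : list T) F D x :
  (forall b, derivable_pt_lim (F b) x (D b)) ->
  derivable_pt_lim (fun t => lsum l (fun b => F b t)) x (lsum l D).
Proof.
intros H; induction l as [|b l IH].
- apply (derivable_pt_lim_const 0).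
- apply (derivable_pt_lim_plus _ _ _ _ _ (H b) IH).
Qed.

Lemma derivable_pt_lim_E_ising n A F D x :
  (forall z, derivable_pt_lim (fun t => F t z) x (D z)) ->
  derivable_pt_lim (fun t => E_ising n A (F t)) x (E_ising n A D).
Proof.
intros H; unfold E_ising.
apply (derivable_pt_lim_lsum _ (fun b t => ising_weight n A (spin b) / ising_Z n A * F t (spin b))).
intros b; apply derivable_pt_lim_scal, H.
Qed.

Lemma derivable_pt_lim_exp_affine a s b :
  derivable_pt_lim (fun t => exp (- (a + (t - b) * s))) b (exp (- a) * - s).
Proof.
assert (Hin : derivable_pt_lim (fun t => - (a + (t - b) * s)) b (- s)).
{ pose proof (derivable_pt_lim_plus _ _ b _ _
    (derivable_pt_lim_scal id (- s) b 1 (derivable_pt_lim_id b))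
    (derivable_pt_lim_const (b * s - a) b)) as Hlin.
  rewrite Rmult_1_r, Rplus_0_r in Hlin.
  refine (derivable_pt_lim_ext _ _ _ _ _ Hlin).
  intros t; unfold plus_fct, mult_real_fct, fct_cte, id; ring. }
replace (exp (- a)) with (exp (- (a + (b - b) * s))) by (f_equal; ring).
apply (derivable_pt_lim_comp _ exp _ _ _ Hin (derivable_pt_lim_exp _)).
Qed.

Lemma Stilde_upd n A w k t :
  Stilde n A (upd w k t) = E_ising n A (fun z =>
    exp (- (rsum (n - 1) (fun j => vcoef n w j * z (n - 1)%nat * z j)
            + (t - w k) * signed_embed n (fun j => z (n - 1)%nat * z j) k))).
Proof.
unfold Stilde; apply E_ising_ext; intros z; do 2 f_equal.
rewrite <- rsum_vcoef_slope, Rmult_comm, <- rsum_scal_r, <- rsum_plus.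
apply rsum_ext; intros j _; rewrite vcoef_upd; ring.
Qed.

Lemma E_miss_G_miss n A p w k : (1 <= n)%nat -> (forall j, (j < n)%nat -> p j < 1) ->
  E_miss n A p (fun X => G_miss n p w X k)
  = E_ising n A (fun z => exp (- rsum (n - 1) (fun j => vcoef n w j * z (n - 1)%nat * z j))
                          * - signed_embed n (fun j => z (n - 1)%nat * z j) k).
Proof.
intros Hn Hp; unfold E_miss; apply E_ising_ext; intros z.
transitivity (lsum (bcube n) (fun c => mask_prob n p c * signed_embed n (g_miss n p w (mask c z)) k));
  [reflexivity|].
rewrite lsum_signed_embed.
rewrite (signed_embed_ext _ _ (fun i => - exp (- rsum (n - 1)
    (fun j => vcoef n w j * z (n - 1)%nat * z j)) * (z (n - 1)%nat * z i)))
  by (intros i Hi; rewrite mask_mean_g_miss by assumption; ring).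
rewrite signed_embed_scal; ring.
Qed.

Lemma Stilde_partial_derivative n A p w k : (1 <= n)%nat -> (forall j, (j < n)%nat -> p j < 1) ->
  derivable_pt_lim (fun t => Stilde n A (upd w k t)) (w k)
    (E_miss n A p (fun X => G_miss n p w X k)).
Proof.
intros Hn Hp; rewrite E_miss_G_miss by assumption.
eapply derivable_pt_lim_ext; [intros t; symmetry; apply Stilde_upd|].
apply derivable_pt_lim_E_ising; intros z; apply derivable_pt_lim_exp_affine.
Qed.

Lemma rmaxn_ge m f i : (i < m)%nat -> f i <= rmaxn m f.
Proof.
induction m as [|m IH]; intros Hi; [lia|]; simpl.
destruct (Nat.eq_dec i m) as [->|]; [apply Rmax_r | eapply Rle_trans; [apply IH; lia | apply Rmax_l]].
Qed.

Lemma rmaxn_bounds m f : (forall i, (i < m)%nat -> 0 <= f i < 1) -> 0 <= rmaxn m f < 1.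
Proof.
induction m as [|m IH]; simpl; intros H; [lra|].
assert (0 <= rmaxn m f < 1) by (apply IH; intros; apply H; lia).
assert (0 <= f m < 1) by (apply H; lia).
unfold Rmax; destruct (Rle_dec _ _); lra.
Qed.

Lemma Rabs_exp_sub_div_le t a p : Rabs t <= a -> 0 <= p < 1 ->
  Rabs ((exp t - p) / (1 - p)) <= exp (a / (1 - p)).
Proof.
intros Ht Hp; set (r := 1 - p); set (u := a / r).
assert (Hr : 0 < r <= 1) by (unfold r; lra).
assert (Hau : a = r * u) by (unfold u; field; lra).
assert (Hupper : exp t <= exp a) by (apply exp_le_exp_compat; pose proof (Rle_abs t); lra).
assert (Hlower : exp (- a) <= exp t)
  by (apply exp_le_exp_compat; pose proof (Rle_abs (- t)); rewrite Rabs_Ropp in *; lra).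
assert (Hu : exp a * (1 + (u - a)) <= exp u).
{ replace (exp u) with (exp a * exp (u - a)) by (rewrite <- exp_plus; f_equal; ring).
  apply Rmult_le_compat_l; [left; apply exp_pos | apply exp_ineq1_le]. }
assert (Ha : exp a * (1 + - a) <= 1).
{ replace 1 with (exp a * exp (- a)) at 2 by (rewrite <- exp_plus, <- exp_0; f_equal; ring).
  apply Rmult_le_compat_l; [left; apply exp_pos | apply exp_ineq1_le]. }
assert (Hu1 := exp_ineq1_le u).
assert (Hma := exp_ineq1_le (- a)).
assert (Hnum : Rabs (exp t - p) <= r * exp u).
{ apply Rabs_le; split.
  - assert (r * (1 + u) <= r * exp u) by (apply Rmult_le_compat_l; lra).
    unfold r in *; lra.
  - assert (r * (exp a * (1 + (u - a))) <= r * exp u) by (apply Rmult_le_compat_l; lra).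
    assert ((1 - r) * (exp a * (1 + - a)) <= 1 - r) by (rewrite <- (Rmult_1_r (1 - r)) at 2;
      apply Rmult_le_compat_l; lra).
    unfold r in *; nra. }
unfold Rdiv; rewrite Rabs_mult, Rabs_inv, (Rabs_right r) by lra.
apply (Rmult_le_reg_r r); [lra|].
rewrite Rmult_assoc, Rinv_l by lra; lra.
Qed.

Lemma Rabs_mul_le_unit c x y : Rabs x <= 1 -> Rabs y <= 1 -> Rabs (c * x * y) <= Rabs c.
Proof.
intros Hx Hy; rewrite !Rabs_mult.
pose proof (Rabs_pos c); pose proof (Rabs_pos x); pose proof (Rabs_pos y).
assert (Rabs c * Rabs x <= Rabs c) by (rewrite <- (Rmult_1_r (Rabs c)) at 2; apply Rmult_le_compat_l; lra).
rewrite <- (Rmult_1_r (Rabs c)) at 2; apply Rmult_le_compat; try lra; apply Rmult_le_pos; lra.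
Qed.

Lemma Rabs_g_miss_le n p w X i q : (1 <= n)%nat -> (i < n - 1)%nat ->
  (forall j, (j < n)%nat -> 0 <= p j < 1) -> 0 < q <= 1 ->
  (forall j, (j < n)%nat -> q <= 1 - p j) ->
  (forall j, (j < n)%nat -> Rabs (X j) <= 1) ->
  Rabs (g_miss n p w X i) <= / q ^ 2 * exp (rsum (n - 1) (fun j => Rabs (vcoef n w j)) / q).
Proof.
intros Hn Hi Hp Hq Hpq HX.
set (L := (n - 1)%nat) in *.
set (a j := Rabs (vcoef n w j)).
assert (Hinv : forall j, (j < n)%nat -> 0 < / (1 - p j) <= / q).
{ intros j Hj; specialize (Hpq j Hj); split; [apply Rinv_0_lt_compat | apply Rinv_le_contravar]; lra. }
assert (Hexp : forall j, (j < n)%nat -> Rabs (- vcoef n w j * X L * X j) <= a j).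
{ intros j Hj; unfold a; rewrite <- (Rabs_Ropp (vcoef n w j)).
  apply Rabs_mul_le_unit; apply HX; unfold L; lia. }
assert (Hlast : Rabs (- (X L / (1 - p L))) <= / q).
{ rewrite Rabs_Ropp; unfold Rdiv; rewrite Rabs_mult, Rabs_inv, (Rabs_right (1 - p L))
    by (specialize (Hp L ltac:(unfold L; lia)); lra).
  destruct (Hinv L ltac:(unfold L; lia)); pose proof (Rabs_pos (X L)).
  rewrite <- (Rmult_1_l (/ q)); apply Rmult_le_compat; try lra; apply HX; unfold L; lia. }
assert (Hsel : Rabs (exp (- vcoef n w i * X L * X i) * X i / (1 - p i)) <= exp (a i / q) * / q).
{ assert (Hai : a i <= a i / q).
  { unfold Rdiv; rewrite <- (Rmult_1_r (a i)) at 1; apply Rmult_le_compat_l; [apply Rabs_pos|].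
    rewrite <- Rinv_1; apply Rinv_le_contravar; lra. }
  unfold Rdiv; rewrite !Rabs_mult, Rabs_inv, (Rabs_right (exp _)), (Rabs_right (1 - p i))
    by (specialize (Hp i ltac:(lia)); lra || (left; apply exp_pos)).
  destruct (Hinv i ltac:(lia)); pose proof (Rabs_pos (X i)).
  apply Rmult_le_compat; try apply Rmult_le_pos; try lra; [left; apply exp_pos|].
  rewrite <- (Rmult_1_r (exp (a i * / q))); apply Rmult_le_compat; try lra; [left; apply exp_pos| |apply HX; lia].
  apply exp_le_exp_compat; eapply Rle_trans; [apply Rle_abs | eapply Rle_trans; [apply Hexp; lia | exact Hai]]. }
set (P := rprod L (fun j => if Nat.eqb j i then 1 else exp (a j / q))).
assert (Hrest : Rabs (rprod L (fun j => if Nat.eqb j i then 1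
      else (exp (- vcoef n w j * X L * X j) - p j) / (1 - p j))) <= P).
{ apply rprod_Rabs_le; intros j Hj; destruct (Nat.eqb j i); [rewrite Rabs_R1; lra|].
  eapply Rle_trans; [apply Rabs_exp_sub_div_le; [apply Hexp | apply Hp]; unfold L in Hj; lia|].
  apply exp_le_exp_compat; unfold Rdiv; apply Rmult_le_compat_l; [apply Rabs_pos|].
  apply Hinv; unfold L in Hj; lia. }
assert (Hsplit : exp (rsum L a / q) = exp (a i / q) * P).
{ unfold Rdiv, P; rewrite <- rsum_scal_r, exp_rsum, <- (rprod_extract L i (fun j => exp (a j * / q)))
    by exact Hi.
  apply rprod_ext; intros j _; destruct (Nat.eqb_spec j i) as [->|]; reflexivity. }
fold a; rewrite Hsplit.
assert (HP : 0 <= P) by (eapply Rle_trans; [apply Rabs_pos | exact Hrest]).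
unfold g_miss; fold L; rewrite !Rabs_mult.
replace (/ q ^ 2 * (exp (a i / q) * P)) with (/ q * (exp (a i / q) * / q) * P) by (field; lra).
pose proof (exp_pos (a i / q)); pose proof (Rinv_0_lt_compat q ltac:(lra)).
apply Rmult_le_compat; try apply Rmult_le_pos; try apply Rabs_pos; auto.
apply Rmult_le_compat; try apply Rabs_pos; auto.
Qed.

Lemma rsum_Rabs_vcoef_le n w lam : (1 <= n)%nat -> in_simplex lam (2 * n - 1) w ->
  rsum (n - 1) (fun j => Rabs (vcoef n w j)) <= lam.
Proof.
intros Hn [Hw Hs].
replace (2 * n - 1)%nat with (n - 1 + S (n - 1))%nat in Hs by lia.
rewrite rsum_add_range in Hs; simpl in Hs.
assert (0 <= w (n - 1 + (n - 1))%nat) by (apply Hw; lia).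
apply Rle_trans with (rsum (n - 1) (fun j => w j + w (n - 1 + j)%nat));
  [|rewrite rsum_plus; lra].
apply rsum_le; intros j Hj.
assert (0 <= w j) by (apply Hw; lia); assert (0 <= w (n - 1 + j)%nat) by (apply Hw; lia).
unfold vcoef; apply Rabs_le; lra.
Qed.

Lemma Rabs_G_miss_le n lam p X w k : (1 <= n)%nat ->
  (forall i, (i < n)%nat -> 0 <= p i < 1) ->
  (forall i, (i < n)%nat -> Rabs (X i) <= 1) ->
  in_simplex lam (2 * n - 1) w ->
  Rabs (G_miss n p w X k) <= / (1 - rmaxn n p) ^ 2 * exp (lam / (1 - rmaxn n p)).
Proof.
intros Hn Hp HX Hw.
pose proof (rmaxn_bounds n p Hp) as Hmax.
set (q := 1 - rmaxn n p) in *.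
assert (Hq : 0 < q <= 1) by (unfold q; lra).
assert (Hpq : forall j, (j < n)%nat -> q <= 1 - p j)
  by (intros j Hj; pose proof (rmaxn_ge n p j Hj); unfold q; lra).
pose proof (Rinv_0_lt_compat _ (pow_lt q 2 ltac:(lra))).
rewrite G_miss_signed_embed; apply Rabs_signed_embed_le.
- apply Rmult_le_pos; [lra | left; apply exp_pos].
- intros i Hi; eapply Rle_trans; [apply (Rabs_g_miss_le n p w X i q); auto|].
  apply Rmult_le_compat_l; [lra|]; apply exp_le_exp_compat.
  unfold Rdiv; apply Rmult_le_compat_r; [left; apply Rinv_0_lt_compat; lra|].
  apply rsum_Rabs_vcoef_le; assumption.
Qed.

Theorem mainTheorem5 (n : nat) (A : nat -> nat -> R) (lam : R) (p : nat -> R) :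
  (2 <= n)%nat ->
  (forall i j, (i < n)%nat -> (j < n)%nat -> A i j = A j i) ->
  (forall i, (i < n)%nat -> A i i = 0) ->
  0 < lam ->
  (forall i, (i < n)%nat -> 0 <= p i < 1) ->
  (forall (w : nat -> R) (k : nat), (k < 2 * n - 1)%nat ->
     derivable_pt_lim (fun t => Stilde n A (upd w k t)) (w k)
       (E_miss n A p (fun X => G_miss n p w X k)))
  /\
  (forall (X w : nat -> R),
     (forall i, (i < n)%nat -> X i = -1 \/ X i = 0 \/ X i = 1) ->
     in_simplex lam (2 * n - 1) w ->
     forall k, (k < 2 * n - 1)%nat ->
       Rabs (G_miss n p w X k)
         <= / (1 - rmaxn n p) ^ 2 * exp (lam / (1 - rmaxn n p))).
Proof.
intros Hn _ _ _ Hp; split.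
- intros w k _; apply Stilde_partial_derivative; [lia|].
  intros j Hj; apply Hp, Hj.
- intros X w HX Hw k _; apply Rabs_G_miss_le; auto; [lia|].
  intros i Hi; destruct (HX i Hi) as [-> | [-> | ->]]; unfold Rabs; destruct Rcase_abs; lra.
Qed.
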